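(* Let $f:U\to\mathbb{R}^3$ be a Guichard net with Lamé coefficients $H_1,H_2,H_3$ and let $\bar f$ be a Combescure transform of $f$ with Lamé coefficients $\bar H_1,\bar H_2,\bar H_3$ which is an $\alpha^2|\bar f|^2$-system, $\alpha\in\mathbb{R}\setminus\{0\}$. Then the 1-parameter family of Ribaucour transformations of $f$ induced by $\bar f$ contains exactly one Guichard net $\mathcal{R}(f)$, namely the one given by $$\mathcal{R}(f)=f-\frac{2\varphi}{|\bar f|^2}\bar f,\qquad \mathcal{R}(H_i)=H_i-\frac{2\varphi}{|\bar f|^2}\bar H_i,$$ where $\varphi:=\frac1{\alpha^2}\{H_1\bar H_1+H_2\bar H_2-H_3\bar H_3\}$.
   Context: $U\subset\mathbb{R}^3$ open connected, coordinates $(x_1,x_2,x_3)$, $\partial_i=\partial_{x_i}$. A triply orthogonal system is $f:U\to\mathbb{R}^3$ with $\det(\partial_1f,\partial_2f,\partial_3f)\ne0$ and $(\partial_if,\partial_jf)=0$ for $i\ne j$. For $(i,j,k)$ cyclic, $N_i=\partial_jf\times\partial_kf/|\partial_jf\times\partial_kf|$, Lamé coefficients $H_i$ by $\partial_if=H_iN_i$, rotational coefficients $\beta_{ij}=\frac1{H_i}\partial_iH_j$. A Combescure transform of $f$ is a triply orthogonal system $\bar f$ with the same rotational coefficients, $\partial_i\bar f=\bar H_iN_i$ (Lamé coefficients $\bar H_i$ taken with respect to the same $N_i$). A $\chi$-system is one with $H_1^2+H_2^2-H_3^2=\chi$; a Guichard net is a $0$-system; an $\alpha^2|\bar f|^2$-system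 is one with $\bar H_1^2+\bar H_2^2-\bar H_3^2=\alpha^2|\bar f|^2$. Induced Ribaucour transforms: given a Combescure transform $\bar f$ of $f$, put $\gamma_i:=\bar f\cdot N_i$ (so $|\bar f|^2=\gamma_1^2+\gamma_2^2+\gamma_3^2$). For every solution $\varphi$ of $\partial_i\varphi=H_i\gamma_i$ ($i=1,2,3$; such solutions exist and are unique up to an additive constant), the map $f'=f-\frac{2\varphi}{|\bar f|^2}\bar f$, with Lamé coefficients $H'_i=H_i-\frac{2\varphi}{|\bar f|^2}\bar H_i$, is a Ribaucour transform of $f$ (corresponding coordinate surfaces envelop a common sphere congruence with corresponding curvature lines); these form the 1-parameter family of Ribaucour transforms induced by $\bar f$. Such $f'$ is a Guichard net if $H_1'^2+H_2'^2-H_3'^2=0$. *)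

From HB Require Import structures.
From mathcomp Require Import all_boot all_order all_algebra.
From mathcomp Require Import all_classical all_reals all_analysis.
Set Implicit Arguments. Unset Strict Implicit. Unset Printing Implicit Defensive.
Import Order.TTheory GRing.Theory Num.Theory.
Import numFieldNormedType.Exports.
Local Open Scope classical_set_scope.
Local Open Scope ring_scope.

Section Defs.
Variable R : realType.
Notation V := 'rV[R]_3.

Definition evec (i : 'I_3) : V := delta_mx 0 i.

Definition dot (u v : V) : R := \sum_(k < 3) u 0 k * v 0 k.
Definition enorm (u : V) : R := Num.sqrt (dot u u).
Definition cross (u v : V) : V :=
  \row_k (u 0 (ordS k) * v 0 (ordS (ordS k)) - u 0 (ordS (ordS k)) * v 0 (ordS k)).

Definition pd {W : normedModType R} (i : 'I_3) (g : V -> W) : V -> W :=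
  fun x => 'D_(evec i) g x.

Definition pds {W : normedModType R} (s : seq 'I_3) (g : V -> W) : V -> W :=
  foldr (fun i h => pd i h) g s.

Definition smooth_on {W : normedModType R} (U : set V) (g : V -> W) : Prop :=
  forall (s : seq 'I_3) (x : V), U x -> differentiable (pds s g) x.

Definition triply_orthogonal (U : set V) (f : V -> V) : Prop :=
  smooth_on U f /\
  (forall x, U x -> \det (\matrix_(i < 3, j < 3) pd i f x 0 j) != 0) /\
  (forall x (i j : 'I_3), U x -> i != j -> dot (pd i f x) (pd j f x) = 0).

Definition Nvec (f : V -> V) (i : 'I_3) (x : V) : V :=
  let c := cross (pd (ordS i) f x) (pd (ordS (ordS i)) f x) in (enorm c)^-1 *: c.

(* Lame coefficients of g with respect to the normals N_i of f:
   d_i g = H_i N_i  (for g = f these are the Lame coefficients of f) *)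
Definition Lame (f g : V -> V) (i : 'I_3) (x : V) : R := dot (pd i g x) (Nvec f i x).

Definition rotcoef (H : 'I_3 -> V -> R) (i j : 'I_3) (x : V) : R :=
  (H i x)^-1 * pd i (H j) x.

Definition combescure (U : set V) (f fbar : V -> V) : Prop :=
  triply_orthogonal U fbar /\
  (forall x i, U x -> pd i fbar x = Lame f fbar i x *: Nvec f i x) /\
  (forall x (i j : 'I_3), U x -> i != j ->
     rotcoef (Lame f fbar) i j x = rotcoef (Lame f f) i j x).

Definition i0 : 'I_3 := @Ordinal 3 0 isT.
Definition i1 : 'I_3 := @Ordinal 3 1 isT.
Definition i2 : 'I_3 := @Ordinal 3 2 isT.

Definition lorentz_sq (H : 'I_3 -> V -> R) (x : V) : R :=
  H i0 x ^+ 2 + H i1 x ^+ 2 - H i2 x ^+ 2.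

Definition guichard (U : set V) (f : V -> V) : Prop :=
  triply_orthogonal U f /\ forall x, U x -> lorentz_sq (Lame f f) x = 0.

Definition alpha_system (U : set V) (f fbar : V -> V) (alpha : R) : Prop :=
  forall x, U x -> lorentz_sq (Lame f fbar) x = alpha ^+ 2 * dot (fbar x) (fbar x).

Definition gam (f fbar : V -> V) (i : 'I_3) (x : V) : R := dot (fbar x) (Nvec f i x).

Definition induced_potential (U : set V) (f fbar : V -> V) (phi : V -> R) : Prop :=
  forall x (i : 'I_3), U x -> is_derive x (evec i) phi (Lame f f i x * gam f fbar i x).

Definition ribaucour (f fbar : V -> V) (phi : V -> R) : V -> V :=
  fun x => f x - (2 * phi x / dot (fbar x) (fbar x)) *: fbar x.
Definition ribaucour_Lame (f fbar : V -> V) (phi : V -> R) (i : 'I_3) (x : V) : R :=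
  Lame f f i x - 2 * phi x / dot (fbar x) (fbar x) * Lame f fbar i x.

Definition ribaucour_guichard (U : set V) (f fbar : V -> V) (phi : V -> R) : Prop :=
  forall x, U x -> lorentz_sq (ribaucour_Lame f fbar phi) x = 0.

Definition phi_R (f fbar : V -> V) (alpha : R) (x : V) : R :=
  (alpha ^+ 2)^-1 * (Lame f f i0 x * Lame f fbar i0 x + Lame f f i1 x * Lame f fbar i1 x
                      - Lame f f i2 x * Lame f fbar i2 x).

End Defs.

From HB Require Import structures.
From mathcomp Require Import all_boot all_order all_algebra.
From mathcomp Require Import all_classical all_reals all_analysis.
From mathcomp Require Import ring lra.
Import Order.TTheory GRing.Theory Num.Theory.
Import numFieldNormedType.Exports.
Local Open Scope classical_set_scope.
Local Open Scope ring_scope.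
Set Implicit Arguments. Unset Strict Implicit. Unset Printing Implicit Defensive.

(* Differentiating the constraints H_1^2 + H_2^2 - H_3^2 = 0 and
   Hbar_1^2 + Hbar_2^2 - Hbar_3^2 = alpha^2 |fbar|^2 along x_i, and trading the mixed terms
   through H_i d_i Hbar_j = Hbar_i d_i H_j (equal rotational coefficients), gives
   d_i phi_R = H_i gamma_i, so phi_R is an induced potential.  For any induced potential phi,
   H'_1^2 + H'_2^2 - H'_3^2 = 4 alpha^2 phi (phi - phi_R) / |fbar|^2, and phi - phi_R is
   constant on the connected set U.  Hence f' is a Guichard net iff phi = phi_R or phi = 0
   on U; but phi = 0 forces gamma_i = fbar . N_i = 0, so fbar is orthogonal to the frame
   d_i fbar = Hbar_i N_i and vanishes. *)

Lemma big_ord3 (M : nmodType) (G : 'I_3 -> M) : \sum_i G i = G i0 + G i1 + G i2.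
Proof.
rewrite !big_ord_recl big_ord0 addr0 addrA; congr (G _ + G _ + G _); exact: val_inj.
Qed.

Lemma det_mx33 (F : comPzRingType) (M : 'M[F]_3) : \det M =
  M i0 i0 * (M i1 i1 * M i2 i2 - M i1 i2 * M i2 i1)
  - M i0 i1 * (M i1 i0 * M i2 i2 - M i1 i2 * M i2 i0)
  + M i0 i2 * (M i1 i0 * M i2 i1 - M i1 i1 * M i2 i0).
Proof.
rewrite (expand_det_row M i0) big_ord3 /cofactor.
rewrite !(expand_det_row _ ord0) !big_ord_recl !big_ord0 /cofactor !det_mx11 !mxE /=.
pose Mn (a b : nat) := M (inord a) (inord b).
have MnE i j : M i j = Mn i j by rewrite /Mn !inord_val.
rewrite !MnE /=; ring.
Qed.

Section LorentzForm.
Variable F : fieldType.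

Definition lsign (i : 'I_3) : F := if i == i2 then -1 else 1.

Definition lorentz (u w : 'I_3 -> F) : F := \sum_i lsign i * (u i * w i).

Lemma lorentzE u w : lorentz u w = u i0 * w i0 + u i1 * w i1 - u i2 * w i2.
Proof. by rewrite /lorentz big_ord3 /lsign /=; ring. Qed.

Lemma lorentzC u w : lorentz u w = lorentz w u.
Proof. by rewrite !lorentzE; ring. Qed.

Lemma lorentz_pivot (a b da db : 'I_3 -> F) (k : 'I_3) (c : F) :
  a k != 0 -> b k != 0 -> (forall j, j != k -> a k * db j = b k * da j) ->
  lorentz a da = 0 -> lorentz b db = b k * c ->
  lorentz a db + lorentz da b = a k * c.
Proof.
move=> ak0 bk0 rot Ha Hb; apply: (mulfI (mulf_neq0 ak0 bk0)).
(* After multiplying by [a k * b k], the hypothesis on [db j] (j != k) turns every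
   mixed term into a term of [lorentz a da] or of [lorentz b db]. *)
have termE j : a k * b k * (lsign j * (a j * db j) + lsign j * (da j * b j)) =
    b k ^+ 2 * (lsign j * (a j * da j)) + a k ^+ 2 * (lsign j * (b j * db j)).
  have [->|jk] := eqVneq j k; first by ring.
  apply/eqP; rewrite -subr_eq0; apply/eqP.
  transitivity (lsign j * (b k * a j - a k * b j) * (a k * db j - b k * da j)); first by ring.
  by rewrite rot // subrr mulr0.
rewrite /lorentz -big_split mulr_sumr (eq_bigr _ (fun j _ => termE j)) big_split.
rewrite -!mulr_sumr -/(lorentz a da) -/(lorentz b db) /= Ha Hb; ring.
Qed.

Lemma lorentz_ribaucour (h b : 'I_3 -> F) (p n a : F) : n != 0 -> a != 0 ->
  lorentz h h = 0 -> lorentz b b = a ^+ 2 * n ->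
  lorentz (fun i => h i - 2 * p / n * b i) (fun i => h i - 2 * p / n * b i) =
  4 * a ^+ 2 * p * (p - (a ^+ 2)^-1 * lorentz h b) / n.
Proof.
move=> n0 a0 Hh Hb; set t := 2 * p / n.
transitivity (lorentz h h - 2 * t * lorentz h b + t ^+ 2 * lorentz b b).
  by rewrite !lorentzE; ring.
by rewrite Hh Hb /t; field; rewrite n0 a0.
Qed.

End LorentzForm.
Arguments lsign {F} i.

Section Vectors.
Variable R : realType.
Notation V := 'rV[R]_3.
Implicit Types u w : V.

Lemma dotC u w : dot u w = dot w u.
Proof. by apply: eq_bigr => k _; rewrite mulrC. Qed.

Lemma dotZl (a : R) u w : dot (a *: u) w = a * dot u w.
Proof. by rewrite /dot mulr_sumr; apply: eq_bigr => k _; rewrite mxE mulrA. Qed.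

Lemma dotZr (a : R) u w : dot u (a *: w) = a * dot u w.
Proof. by rewrite dotC dotZl dotC. Qed.

Lemma dot_ge0 u : 0 <= dot u u.
Proof. by apply: sumr_ge0 => k _; rewrite -expr2 sqr_ge0. Qed.

Lemma dot_eq0 u : (dot u u == 0) = (u == 0).
Proof.
apply/eqP/eqP => [|->]; last by rewrite /dot big1 // => k _; rewrite mxE mul0r.
move=> /psumr_eq0P u0; apply/rowP => k; rewrite mxE.
by apply/eqP; rewrite -sqrf_eq0 expr2 u0 // => j _; rewrite -expr2 sqr_ge0.
Qed.

Lemma dot_gt0 u : u != 0 -> 0 < dot u u.
Proof. by rewrite lt_def dot_eq0 dot_ge0 => ->. Qed.

Lemma enorm_eq0 u : (enorm u == 0) = (u == 0).
Proof. by rewrite /enorm sqrtr_eq0 le_eqVlt dot_eq0 ltNge dot_ge0 orbF. Qed.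

Lemma triple_det (a : 'I_3 -> V) (j : 'I_3) :
  dot (a j) (cross (a (ordS j)) (a (ordS (ordS j)))) =
  \det (\matrix_(i < 3, k < 3) a i 0 k).
Proof.
rewrite det_mx33 /dot /cross big_ord3 !mxE.
pose an (i k : nat) := a (inord i) 0 (inord k).
have anE i k : a i 0 k = an i k by rewrite /an !inord_val.
by case: j => -[|[|[|//]]] ? /=; rewrite !anE /=; ring.
Qed.

Lemma dot_basis_eq0 (a : 'I_3 -> V) u : \det (\matrix_(i < 3, k < 3) a i 0 k) != 0 ->
  (forall i, dot (a i) u = 0) -> u = 0.
Proof.
set M := \matrix_(i, k) a i 0 k => detM au.
have Mu : M *m u^T = 0.
  apply/matrixP => i j; rewrite !mxE -[RHS](au i).
  by apply: eq_bigr => k _; rewrite !mxE (ord1 j).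
have : u^T = 0 by rewrite -(mulKmx (_ : M \in unitmx) u^T) ?Mu ?mulmx0 // unitmxE unitfE.
by move/(congr1 trmx); rewrite trmxK trmx0.
Qed.

End Vectors.

Lemma connected_locally_constant (T : topologicalType) (Y : Type) (A : set T) (D : T -> Y) :
  connected A -> (forall x, A x -> \forall y \near x, D y = D x) ->
  forall x y, A x -> A y -> D y = D x.
Proof.
move=> cA locD x y Ax Ay.
suff BA : [set z | A z /\ D z = D x] = A by move: Ay; rewrite -BA => -[].
apply: cA; first by exists x.
- exists (interior [set z | D z = D x]); first exact: open_interior.
  apply/seteqP; split=> z; last by move=> [Az /interior_subset].
  by move=> [Az Dz]; split=> //; apply: filterS (locD z Az) => w /= ->.
- exists (~` interior [set z | D z <> D x]); first exact/open_closedC/open_interior.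
  apply/seteqP; split=> z; first by move=> [Az Dz]; split=> // /interior_subset.
  move=> [Az nDz]; split=> //; apply: contrapT => Dzx; apply: nDz.
  by apply: filterS (locD z Az) => w /= ->.
Qed.

Section ZeroPartials.
Variable R : realType.

Lemma is_derive0_segment (V : normedModType R) (g : V -> R) (p e : V) (a b : R) : a <= b ->
  (forall t, a <= t <= b -> is_derive (t *: e + p) e g 0) -> g (b *: e + p) = g (a *: e + p).
Proof.
move=> ab g0; pose h t := g (t *: e + p).
have h0 t : a <= t <= b -> is_derive t 1 h 0.
  move=> tab; have [dg Dg] := g0 t tab.
  have quotE : (fun s : R => s^-1 *: ((h \o shift t) (s *: 1) - h t)) =
               (fun s : R => s^-1 *: ((g \o shift (t *: e + p)) (s *: e) - g (t *: e + p))).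
    by apply/funext => s; rewrite /h /= [s *: 1]mulr1 scalerDl addrA.
  by split; rewrite /derivable /derive quotE.
have [c _] : exists2 c, c \in `[a, b]%R & h b - h a = 0 * (b - a).
  apply: (MVT_segment (df := fun=> 0)) => //.
    by move=> t; rewrite in_itv /= => /andP[ta tb]; apply: h0; rewrite !ltW.
  by apply: derivable_within_continuous => t; rewrite in_itv /= => /h0 [].
by rewrite mul0r => /eqP; rewrite subr_eq0 => /eqP.
Qed.

Lemma is_derive0_line (V : normedModType R) (g : V -> R) (p e : V) (s : R) :
  (forall t, `|t| <= `|s| -> is_derive (t *: e + p) e g 0) -> g (s *: e + p) = g p.
Proof.
move=> g0; rewrite -[in RHS](add0r p) -[in RHS](scale0r e).
have [s0|s0] := leP 0 s.
  by apply: is_derive0_segment => // t /andP[t0 ts]; apply: g0; rewrite !ger0_norm.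
apply/esym/is_derive0_segment; first exact: ltW.
by move=> t /andP[st t0]; apply: g0; rewrite ler0_norm // ltr0_norm // lerN2.
Qed.

End ZeroPartials.

Section ZeroPartialsRow.
Variables (R : realType) (n : nat).
Notation Rn := 'rV[R]_n.

Lemma partials0_near_const (U : set Rn) (D : Rn -> R) y : open U -> U y ->
  (forall z i, U z -> is_derive z (delta_mx 0 i) D 0) -> \forall z \near y, D z = D y.
Proof.
move=> oU Uy D0.
have : nbhs y U by apply: open_nbhs_nbhs.
rewrite nbhs_ballP => -[r r0 ballU]; apply/nbhs_ballP; exists r => // z [_ yz].
have boxU (w : Rn) : (forall j, `|w 0 j - y 0 j| <= `|z 0 j - y 0 j|) -> U w.
  move=> wy; apply: ballU; split=> // i j; rewrite (ord1 i).
  by rewrite /ball /= distrC; apply: le_lt_trans (wy j) _; rewrite distrC; exact: yz.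
pose q k := \row_j (if (j < k)%N then z 0 j else y 0 j).
have step k (kn : (k < n)%N) : D (q k.+1) = D (q k).
  pose e : Rn := delta_mx 0 (Ordinal kn).
  have qS : q k.+1 = (z 0 (Ordinal kn) - y 0 (Ordinal kn)) *: e + q k.
    apply/rowP => j; rewrite !mxE ltnS leq_eqVlt eqxx -val_eqE /=.
    have [jk|jk|jk] := ltngtP j k; rewrite ?mulr0 ?add0r //.
    have -> : Ordinal kn = j by exact: val_inj.
    by rewrite /= mulr1 subrK.
  rewrite qS; apply: is_derive0_line => t t_le; apply: D0; apply: boxU => j.
  rewrite !mxE -[j == _]val_eqE /=.
  have [jk|jk|jk] := ltngtP j k; rewrite ?mulr0 ?add0r ?mulr1 ?addrK ?subrr ?normr0 ?normr_ge0 //.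
  by have -> : j = Ordinal kn by exact: val_inj.
have qE k : (k <= n)%N -> D (q k) = D y.
  elim: k => [_|k IH kn]; first by congr D; apply/rowP => j; rewrite mxE.
  by rewrite step // IH // ltnW.
by rewrite -(qE n) //; congr D; apply/rowP => j; rewrite mxE ltn_ord.
Qed.

Lemma partials0_connected_const (U : set Rn) (D : Rn -> R) : open U -> connected U ->
  (forall z i, U z -> is_derive z (delta_mx 0 i) D 0) -> forall y z, U y -> U z -> D z = D y.
Proof.
move=> oU cU D0; apply: connected_locally_constant => // y Uy.
exact: partials0_near_const.
Qed.

End ZeroPartialsRow.

Section Differentiability.
Variables (R : realType) (W : normedModType R).
Notation V := 'rV[R]_3.

Lemma differentiable_row_coord n (g : W -> 'rV[R]_n) x k :
  differentiable g x -> differentiable (fun y => g y 0 k) x.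
Proof.
by move=> dg; apply: (differentiable_comp (g := fun M : 'rV[R]_n => M 0 k)) => //;
  exact: differentiable_coord.
Qed.

Lemma differentiable_dot (u w : W -> V) x :
  (forall k, differentiable (fun y => u y 0 k) x) ->
  (forall k, differentiable (fun y => w y 0 k) x) ->
  differentiable (fun y => dot (u y) (w y)) x.
Proof.
move=> du dw; rewrite (_ : (fun y => _) = \sum_k (fun y => u y 0 k * w y 0 k)).
  by elim/big_ind: _ => [|f g|k _]; [exact: differentiable_cst|exact: differentiableD|
    exact: differentiableM].
by rewrite fct_sumE.
Qed.

Lemma differentiable_cross (u w : W -> V) x k :
  (forall k, differentiable (fun y => u y 0 k) x) ->
  (forall k, differentiable (fun y => w y 0 k) x) ->
  differentiable (fun y => cross (u y) (w y) 0 k) x.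
Proof.
move=> du dw; under eq_fun do rewrite mxE.
by apply: differentiableB; apply: differentiableM.
Qed.

End Differentiability.

Section Derivatives.
Variables (R : realType) (W : normedModType R).
Notation V := 'rV[R]_3.

Lemma is_derive_eq0_near (F : W -> R) x v d :
  (\forall y \near x, F y = 0) -> is_derive x v F d -> d = 0.
Proof.
move=> F0 dF; rewrite -(@derive_val _ _ _ _ _ _ _ dF) (near_eq_derive v F0).
exact: derive_cst.
Qed.

Lemma is_derive_lorentz (A B : 'I_3 -> W -> R) (dA dB : 'I_3 -> R) x v :
  (forall j, is_derive x v (A j) (dA j)) -> (forall j, is_derive x v (B j) (dB j)) ->
  is_derive x v (fun y => lorentz (A^~ y) (B^~ y))
    (lorentz (A^~ x) dB + lorentz dA (B^~ x)).
Proof.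
move=> dAx dBx.
have -> : (fun y => lorentz (A^~ y) (B^~ y)) = \sum_j (lsign j \*: (A j * B j)).
  by rewrite fct_sumE.
have hj j : is_derive x v (lsign j \*: (A j * B j))
    (lsign j *: (A j x *: dB j + B j x *: dA j)).
  by apply: is_deriveZ; exact: is_deriveM.
apply: (is_derive_eq (is_derive_sum hj)).
rewrite /lorentz -big_split; apply: eq_bigr => j _ /=.
by rewrite /GRing.scale /= mulrDr [dA j * _]mulrC.
Qed.

Lemma is_derive_dot (g : W -> V) x v : differentiable g x ->
  is_derive x v (fun y => dot (g y) (g y)) (2 * dot (g x) ('D_v g x)).
Proof.
move=> dg.
have dgk k : is_derive x v (fun y => g y 0 k) ('D_v g x 0 k).
  rewrite derive_mx ?mxE; last exact: diff_derivable.
  by apply: derivableP; apply: diff_derivable; exact: differentiable_row_coord.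
have -> : (fun y => dot (g y) (g y)) = \sum_k ((fun y => g y 0 k) * (fun y => g y 0 k)).
  by rewrite fct_sumE.
apply: (is_derive_eq (is_derive_sum (fun k => is_deriveM (dgk k) (dgk k)))).
rewrite /dot mulr_sumr; apply: eq_bigr => k _ /=.
by rewrite /GRing.scale /=; ring.
Qed.

End Derivatives.

Section Frame.
Variable R : realType.
Notation V := 'rV[R]_3.
Implicit Types (U : set V) (f g : V -> V).

Definition normal_cross f (i : 'I_3) (x : V) : V :=
  cross (pd (ordS i) f x) (pd (ordS (ordS i)) f x).

Lemma LameE f g i x :
  Lame f g i x = (enorm (normal_cross f i x))^-1 * dot (pd i g x) (normal_cross f i x).
Proof. by rewrite /Lame dotZr. Qed.

Lemma dot_pd_normal_cross f i x :
  dot (pd i f x) (normal_cross f i x) = \det (\matrix_(j < 3, k < 3) pd j f x 0 k).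
Proof. exact: (triple_det (fun j => pd j f x)). Qed.

Section TriplyOrthogonal.
Variables (U : set V) (f : V -> V).
Hypothesis orth_f : triply_orthogonal U f.

Lemma normal_cross_neq0 i x : U x -> normal_cross f i x != 0.
Proof.
move=> Ux; have [_ [detf _]] := orth_f.
apply: contra (detf x Ux) => /eqP c0.
by rewrite -(dot_pd_normal_cross f i) c0 dotC -(scale0r 0) dotZl mul0r.
Qed.

Lemma Lame_neq0 i x : U x -> Lame f f i x != 0.
Proof.
move=> Ux; have [_ [detf _]] := orth_f.
by rewrite LameE mulf_neq0 ?dot_pd_normal_cross ?detf // invr_eq0 enorm_eq0 normal_cross_neq0.
Qed.

Lemma differentiable_Lame g i x : smooth_on U g -> U x -> differentiable (Lame f g i) x.
Proof.
move=> smooth_g Ux; have [smooth_f _] := orth_f.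
have dpd (h : V -> V) j : smooth_on U h -> forall k, differentiable (fun y => pd j h y 0 k) x.
  by move=> smooth_h k; apply: differentiable_row_coord; exact: (smooth_h [:: j]).
have dc k : differentiable (fun y => normal_cross f i y 0 k) x.
  by apply: differentiable_cross; exact: dpd.
have -> : Lame f g i = fun y =>
    (enorm (normal_cross f i y))^-1 * dot (pd i g y) (normal_cross f i y).
  by apply/funext => y; exact: LameE.
apply: differentiableM; last by apply: differentiable_dot => //; exact: dpd.
apply: differentiableV; last by rewrite enorm_eq0 normal_cross_neq0.
apply: (differentiable_comp
  (f := fun y => dot (normal_cross f i y) (normal_cross f i y)) (g := Num.sqrt)).
  exact: differentiable_dot.
apply/derivable1_diffP.
by have [] := is_derive1_sqrt (dot_gt0 (normal_cross_neq0 i Ux)).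
Qed.

End TriplyOrthogonal.

Lemma Lame_combescure_neq0 U f fbar i x : combescure U f fbar -> U x ->
  Lame f fbar i x != 0.
Proof.
move=> [[_ [detfbar _]] [pd_fbar _]] Ux; apply: contra (detfbar x Ux) => /eqP H0.
by rewrite -(dot_pd_normal_cross fbar i) pd_fbar // H0 dotZl mul0r.
Qed.

End Frame.

Section InducedPotential.
Variable R : realType.
Notation V := 'rV[R]_3.
Variables (U : set V) (f fbar : V -> V).
Hypotheses (open_U : open U) (guichard_f : guichard U f) (comb : combescure U f fbar).

Lemma lorentz_sqE (H : 'I_3 -> V -> R) x : lorentz_sq H x = lorentz (H^~ x) (H^~ x).
Proof. by rewrite lorentzE /lorentz_sq !expr2. Qed.

Lemma phi_RE alpha x : phi_R f fbar alpha x =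
  (alpha ^+ 2)^-1 * lorentz (Lame f f ^~ x) (Lame f fbar ^~ x).
Proof. by rewrite lorentzE. Qed.

Lemma induced_potential_phi_R alpha : alpha != 0 -> alpha_system U f fbar alpha ->
  induced_potential U f fbar (phi_R f fbar alpha).
Proof.
move=> alpha0 alpha_sys x i Ux.
have [orth_f lorentz_f] := guichard_f.
have [[smooth_fbar _] [pd_fbar rot]] := comb.
have near_U : \forall y \near x, U y by apply: open_nbhs_nbhs; split.
set H := Lame f f; set Hb := Lame f fbar; set e := evec R i.
have dH j : is_derive x e (H j) ('D_e (H j) x).
  exact/derivableP/diff_derivable/(differentiable_Lame orth_f)/Ux/orth_f.1.
have dHb j : is_derive x e (Hb j) ('D_e (Hb j) x).
  exact/derivableP/diff_derivable/(differentiable_Lame orth_f).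
have guichard_d : lorentz (H^~ x) (fun j => 'D_e (H j) x) = 0.
  suff : lorentz (H^~ x) (fun j => 'D_e (H j) x) + lorentz (fun j => 'D_e (H j) x) (H^~ x) = 0.
    by rewrite lorentzC; lra.
  apply: is_derive_eq0_near (is_derive_lorentz dH dH).
  by apply: filterS near_U => y Uy; rewrite -lorentz_sqE lorentz_f.
have alpha_d : lorentz (Hb^~ x) (fun j => 'D_e (Hb j) x) = Hb i x * (alpha ^+ 2 * gam f fbar i x).
  have D0 : lorentz (Hb^~ x) (fun j => 'D_e (Hb j) x) + lorentz (fun j => 'D_e (Hb j) x) (Hb^~ x)
      - alpha ^+ 2 *: (2 * dot (fbar x) ('D_e fbar x)) = 0.
    apply: (is_derive_eq0_near _ (is_deriveB (is_derive_lorentz dHb dHb)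
      (is_deriveZ (alpha ^+ 2) (is_derive_dot e (smooth_fbar [::] x Ux))))).
    apply: filterS near_U => y Uy.
    change (lorentz (Hb^~ y) (Hb^~ y) - alpha ^+ 2 * dot (fbar y) (fbar y) = 0).
    by rewrite -lorentz_sqE alpha_sys // subrr.
  have pd_fbarE : 'D_e fbar x = Hb i x *: Nvec f i x := pd_fbar x i Ux.
  move: D0; rewrite pd_fbarE dotZr -/(gam f fbar i x) (lorentzC (fun j => 'D_e (Hb j) x)).
  rewrite /GRing.scale /=; move: (lorentz _ _) => L; lra.
have Hi0 := Lame_neq0 orth_f i Ux; have Hbi0 := Lame_combescure_neq0 i comb Ux.
have rot_d j : j != i -> H i x * 'D_e (Hb j) x = Hb i x * 'D_e (H j) x.
  move=> ji; have := rot x i j Ux; rewrite eq_sym => /(_ ji); rewrite /rotcoef => rotE.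
  by rewrite -[LHS](mulVKf Hbi0) [_^-1 * _]mulrCA rotE mulVKf.
have := lorentz_pivot Hi0 Hbi0 rot_d guichard_d alpha_d => pivot.
have -> : phi_R f fbar alpha = (alpha ^+ 2)^-1 \*: (fun y => lorentz (H^~ y) (Hb^~ y)).
  by apply/funext => y; rewrite phi_RE.
apply: (is_derive_eq (is_deriveZ _ (is_derive_lorentz dH dHb))).
by rewrite pivot /GRing.scale /= mulrCA mulKf // expf_neq0.
Qed.

End InducedPotential.

Section InducedRibaucour.
Variable R : realType.
Notation V := 'rV[R]_3.
Variables (U : set V) (f fbar : V -> V).
Hypothesis open_U : open U.

Lemma induced_potential_sub_const phi psi : connected U ->
  induced_potential U f fbar phi -> induced_potential U f fbar psi ->
  forall x y, U x -> U y -> phi y - psi y = phi x - psi x.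
Proof.
move=> conn_U pot_phi pot_psi.
apply: (partials0_connected_const (D := phi - psi)) => // z i Uz.
by apply: is_derive_eq (is_deriveB (pot_phi z i Uz) (pot_psi z i Uz)) _; rewrite subrr.
Qed.

Lemma induced_potential_not_identically0 phi x :
  triply_orthogonal U f -> combescure U f fbar -> induced_potential U f fbar phi ->
  U x -> fbar x != 0 -> ~ (forall y, U y -> phi y = 0).
Proof.
move=> orth_f comb pot Ux fbar_x0 phi0; move/eqP: fbar_x0; apply.
have [[_ [det_fbar _]] [pd_fbar _]] := comb.
apply: (dot_basis_eq0 (det_fbar x Ux)) => i.
have : Lame f f i x * gam f fbar i x = 0.
  apply: is_derive_eq0_near (pot x i Ux).
  have near_U : \forall y \near x, U y by apply: open_nbhs_nbhs; split.
  exact: filterS near_U.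
rewrite /= pd_fbar // dotZl dotC => /eqP; rewrite mulf_eq0 (negbTE (Lame_neq0 orth_f i Ux)).
by move=> /eqP gam0; have -> : dot (fbar x) (Nvec f i x) = 0 := gam0; rewrite mulr0.
Qed.

Lemma ribaucour_lorentz_sq phi alpha x : alpha != 0 -> dot (fbar x) (fbar x) != 0 ->
  lorentz_sq (Lame f f) x = 0 ->
  lorentz_sq (Lame f fbar) x = alpha ^+ 2 * dot (fbar x) (fbar x) ->
  lorentz_sq (ribaucour_Lame f fbar phi) x =
  4 * alpha ^+ 2 * phi x * (phi x - phi_R f fbar alpha x) / dot (fbar x) (fbar x).
Proof. by rewrite !lorentz_sqE phi_RE => *; exact: lorentz_ribaucour. Qed.

End InducedRibaucour.

Theorem theorem5p3 (R : realType) (U : set 'rV[R]_3) (f fbar : 'rV[R]_3 -> 'rV[R]_3)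
  (alpha : R) :
  open U -> connected U ->
  guichard U f ->
  combescure U f fbar ->
  (forall x, U x -> fbar x != 0) ->
  alpha != 0 ->
  alpha_system U f fbar alpha ->
  induced_potential U f fbar (phi_R f fbar alpha) /\
  (forall phi : 'rV[R]_3 -> R, induced_potential U f fbar phi ->
     (ribaucour_guichard U f fbar phi <-> forall x, U x -> phi x = phi_R f fbar alpha x)).
Proof.
move=> open_U conn_U guichard_f comb fbar0 alpha0 alpha_sys.
have pot_phi_R := induced_potential_phi_R open_U guichard_f comb alpha0 alpha_sys.
split=> // phi pot_phi.
have [orth_f lorentz_f] := guichard_f.
have fbar2_0 x : U x -> dot (fbar x) (fbar x) != 0 by move=> Ux; rewrite dot_eq0 fbar0.
have rib_lorentz x : U x -> lorentz_sq (ribaucour_Lame f fbar phi) x =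
    4 * alpha ^+ 2 * phi x * (phi x - phi_R f fbar alpha x) / dot (fbar x) (fbar x).
  by move=> Ux; apply: ribaucour_lorentz_sq; rewrite ?fbar2_0 ?lorentz_f ?alpha_sys.
split=> [rib x Ux|phiE x Ux]; last by rewrite rib_lorentz // phiE // subrr !(mulr0, mul0r).
have [//|phi_neq] := eqVneq (phi x) (phi_R f fbar alpha x); exfalso.
apply: (induced_potential_not_identically0 open_U orth_f comb pot_phi Ux (fbar0 x Ux)).
move=> y Uy; have := rib y Uy; rewrite /ribaucour_guichard rib_lorentz // => /eqP.
rewrite !mulf_eq0 invr_eq0 (negbTE (fbar2_0 y Uy)) (negbTE alpha0) orbF /= pnatr_eq0 /=.
rewrite (induced_potential_sub_const open_U conn_U pot_phi pot_phi_R Ux Uy).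
by rewrite subr_eq0 (negbTE phi_neq) orbF => /eqP.
Qed.
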